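(* Let $Q_4$ be the edge graph of the $4$-dimensional hypercube (vertices $\{0,1\}^4$, two vertices adjacent iff they differ in exactly one coordinate). Up to a permutation of the colours (simultaneous permutation of rows and columns of the colour adjacency matrix), the colour adjacency matrices of perfect $2$-colourings of $Q_4$ are exactly the five matrices \[ \begin{pmatrix} 0 & 4 \\ 4 & 0 \end{pmatrix}, \begin{pmatrix} 1 & 3 \\ 1 & 3 \end{pmatrix}, \begin{pmatrix} 1 & 3 \\ 3 & 1 \end{pmatrix}, \begin{pmatrix} 2 & 2 \\ 2 & 2 \end{pmatrix}, \begin{pmatrix} 3 & 1 \\ 1 & 3 \end{pmatrix}, \] and the colour adjacency matrices of perfect $3$-colourings of $Q_4$ are exactly the five matrices \[ \begin{pmatrix} 0 & 0 & 4 \\ 0 & 0 & 4 \\ 1 & 3 & 0 \end{pmatrix}, \begin{pmatrix} 0 & 0 & 4 \\ 0 & 0 & 4 \\ 2 & 2 & 0 \end{pmatrix}, \begin{pmatrix} 0 & 2 & 2 \\ 2 & 0 & 2 \\ 1 & 1 & 2 \end{pmatrix}, \begin{pmatrix} 1 & 1 & 2 \\ 1 & 1 & 2 \\ 1 & 1 & 2 \end{pmatrix}, \begin{pmatrix} 2 & 0 & 2 \\ 0 & 2 & 2 \\ 1 & 1 & 2 \end{pmatrix}. \] In particular each of these matrices is realized by some perfect colouring of $Q_4$.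
   Context: An $m$-colouring of a graph $G=(V,E)$ is a partition of $V$ into $m$ disjoint nonempty sets $V_1,\dots,V_m$ (the colours; adjacent vertices may have the same colour). It is perfect if for all $i,j$ every vertex of colour $i$ has the same number $a_{ij}$ of neighbours of colour $j$; the matrix $A=(a_{ij})$ is its colour adjacency matrix. Relabelling colours by a permutation $\sigma$ replaces $A$ by $(a_{\sigma(i)\sigma(j)})$. *)

From mathcomp Require Import all_boot all_order all_algebra all_fingroup.
Set Implicit Arguments. Unset Strict Implicit. Unset Printing Implicit Defensive.

Definition Q4 := {ffun 'I_4 -> bool}.

Definition q4adj (x y : Q4) : bool := #|[set i | x i != y i]| == 1%N.

Definition is_colouring (m : nat) (c : Q4 -> 'I_m) : Prop :=
  forall i : 'I_m, exists v : Q4, c v = i.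

Definition perfect_with (m : nat) (c : Q4 -> 'I_m) (A : 'M[nat]_m) : Prop :=
  forall (v : Q4) (j : 'I_m), #|[set w | q4adj v w & c w == j]| = A (c v) j.

Definition is_colour_adj_matrix (m : nat) (A : 'M[nat]_m) : Prop :=
  exists c : Q4 -> 'I_m, is_colouring c /\ perfect_with c A.

Definition relabel (m : nat) (s : 'S_m) (A : 'M[nat]_m) : 'M[nat]_m :=
  \matrix_(i, j) A (s i) (s j).

Definition mx_of_rows (m : nat) (rows : seq (seq nat)) : 'M[nat]_m :=
  \matrix_(i, j) nth 0%N (nth [::] rows i) j.

Definition list2 : seq 'M[nat]_2 :=
  [:: mx_of_rows 2 [:: [:: 0; 4]; [:: 4; 0]];
      mx_of_rows 2 [:: [:: 1; 3]; [:: 1; 3]];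
      mx_of_rows 2 [:: [:: 1; 3]; [:: 3; 1]];
      mx_of_rows 2 [:: [:: 2; 2]; [:: 2; 2]];
      mx_of_rows 2 [:: [:: 3; 1]; [:: 1; 3]]]%N.

Definition list3 : seq 'M[nat]_3 :=
  [:: mx_of_rows 3 [:: [:: 0; 0; 4]; [:: 0; 0; 4]; [:: 1; 3; 0]];
      mx_of_rows 3 [:: [:: 0; 0; 4]; [:: 0; 0; 4]; [:: 2; 2; 0]];
      mx_of_rows 3 [:: [:: 0; 2; 2]; [:: 2; 0; 2]; [:: 1; 1; 2]];
      mx_of_rows 3 [:: [:: 1; 1; 2]; [:: 1; 1; 2]; [:: 1; 1; 2]];
      mx_of_rows 3 [:: [:: 2; 0; 2]; [:: 0; 2; 2]; [:: 1; 1; 2]]]%N.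

From mathcomp Require Import all_boot all_order all_algebra all_fingroup.
Set Implicit Arguments. Unset Strict Implicit. Unset Printing Implicit Defensive.

(* Fix an enumeration of the 16 vertices of Q4 and record a colouring as the sequence of
   its colours along it. For a perfect colouring this sequence is equitable: any two
   vertices of the same colour have equally many neighbours of each colour, and the
   colour adjacency matrix is read off from these numbers. Conversely every
   equitable sequence using all m colours is a perfect colouring. Equitability can be
   tested on prefixes, on the vertices whose neighbourhoods are already coloured, so a
   pruned depth-first search enumerates all equitable sequences; for m = 2 and m = 3 their
   matrices are, up to relabelling colours, exactly the listed ones, which is checked by
   computation. *)

Section EquitableSequences.

Variable nbrs : seq (seq nat).

Definition nbr_colours (p : seq nat) i := [seq nth 0 p n | n <- nth [::] nbrs i].

Definition nbhd_within k i := (i < k) && all (fun n => n < k) (nth [::] nbrs i).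

(* [nth 0] gives uncoloured positions the junk colour 0; the tests below only inspect
   settled vertices, whose neighbours are all coloured. *)
Definition settled k := [seq i <- iota 0 k | nbhd_within k i].

Definition newly_settled k := [seq i <- settled k | ~~ nbhd_within k.-1 i].

Definition equitable_on m (I J : seq nat) p :=
  all (fun i => all (fun j => (nth 0 p i == nth 0 p j) ==>
    all (fun c => count_mem c (nbr_colours p i) == count_mem c (nbr_colours p j)) (iota 0 m))
    J) I.

Definition equitable m p := equitable_on m (settled (size p)) (settled (size p)) p.

(* Pairs of vertices that were both settled before the last colour was appended have
   been tested at an earlier level. *)
Definition extend m k (L : seq (seq nat)) :=
  let S := settled k.+1 in let N := newly_settled k.+1 in
  [seq q <- [seq rcons p c | p <- L, c <- iota 0 m] | equitable_on m N S q].

Definition search m k := iteri k (extend m) [:: [::]].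

Lemma mem_settled k i : (i \in settled k) = nbhd_within k i.
Proof. by rewrite mem_filter mem_iota add0n; apply/andb_idr => /andP[]. Qed.

Lemma equitable_onP m I J p :
  reflect {in I & J, forall i j, nth 0 p i = nth 0 p j -> forall c, c < m ->
             count_mem c (nbr_colours p i) = count_mem c (nbr_colours p j)}
          (equitable_on m I J p).
Proof.
apply: (iffP allP) => [eqIJ i j Ii Jj eq_ij c lt_c | eqIJ i Ii].
  have /allP/(_ j Jj) := eqIJ i Ii; rewrite eq_ij eqxx => /allP/(_ c).
  by rewrite mem_iota lt_c => /(_ isT)/eqP.
apply/allP => j Jj; apply/implyP => /eqP eq_ij; apply/allP => c.
by rewrite mem_iota => /andP[_ lt_c]; rewrite (eqIJ i j).
Qed.

Lemma equitable_on_sub m I J I' J' p :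
  {subset I' <= I} -> {subset J' <= J} -> equitable_on m I J p -> equitable_on m I' J' p.
Proof.
move=> sII' sJJ' /equitable_onP eqIJ; apply/equitable_onP => i j /sII' Ii /sJJ' Jj.
exact: eqIJ.
Qed.

Lemma nbr_colours_take k p i :
  nbhd_within k i -> nbr_colours (take k p) i = nbr_colours p i.
Proof.
by case/andP => _ /allP lt_k; apply/eq_in_map => n /lt_k lt_n /=; rewrite nth_take.
Qed.

Lemma nbhd_within_le k k' i : k <= k' -> nbhd_within k i -> nbhd_within k' i.
Proof.
move=> le_k /andP[lt_i /allP lt_nbrs]; rewrite /nbhd_within (leq_trans lt_i le_k).
by apply/allP => n /lt_nbrs /leq_trans; apply.
Qed.

Lemma equitable_take m k p : equitable m p -> equitable m (take k p).
Proof.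
have [le_p_k | lt_k_p] := leqP (size p) k; first by rewrite take_oversize.
have sz_take : size (take k p) = k by rewrite size_takel // ltnW.
move=> /equitable_onP eq_p; apply/equitable_onP => i j.
rewrite !mem_settled sz_take => Si Sj.
rewrite !nbr_colours_take // !nth_take ?(andP Si).1 ?(andP Sj).1 //.
by apply: eq_p; rewrite mem_settled (nbhd_within_le (ltnW lt_k_p)).
Qed.

Lemma equitable_rcons m p x :
  equitable m p -> equitable_on m (newly_settled (size p).+1) (settled (size p).+1) (rcons p x) ->
  equitable m (rcons p x).
Proof.
set k := size p; move=> /equitable_onP eq_p /equitable_onP eq_new.
have old l : l \in settled k.+1 -> l \notin newly_settled k.+1 -> nbhd_within k l.
  by move=> Sl; rewrite mem_filter Sl andbT negbK.
have p_prefix : take k (rcons p x) = p by rewrite -cats1 take_size_cat.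
have same l : nbhd_within k l ->
    nth 0 (rcons p x) l = nth 0 p l /\ nbr_colours (rcons p x) l = nbr_colours p l.
  by move=> Ol; rewrite -(nbr_colours_take _ Ol) p_prefix nth_rcons (andP Ol).1.
apply/equitable_onP => i j; rewrite size_rcons => Si Sj.
have [Ni | /(old i Si) Oi] := boolP (i \in newly_settled k.+1); first exact: eq_new.
have [Nj | /(old j Sj) Oj] := boolP (j \in newly_settled k.+1).
  by move=> eq_ij c lt_c; apply/esym/eq_new.
have [[-> ->] [-> ->]] := (same i Oi, same j Oj).
by apply: eq_p; rewrite mem_settled.
Qed.

Lemma search_equitable m k p :
  p \in search m k -> [/\ size p = k, all (fun c => c < m) p & equitable m p].
Proof.
elim: k p => [|k IHk] p; first by rewrite mem_seq1 => /eqP ->.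
rewrite /search iteriS mem_filter => /andP[eq_new /allpairsP[[q c] [/= Sq]]].
rewrite mem_iota => /andP[_ lt_c] Ep; have [sz_q bnd_q eq_q] := IHk q Sq.
move: eq_new; rewrite Ep size_rcons sz_q all_rcons lt_c bnd_q -sz_q => eq_new.
by split=> //; apply: equitable_rcons.
Qed.

Lemma equitable_search m p :
  all (fun c => c < m) p -> equitable m p -> p \in search m (size p).
Proof.
move=> bnd_p eq_p; rewrite -{1}[p]take_size.
elim: {-2}(size p) (leqnn (size p)) => [_|k IHk lt_k_p]; first by rewrite take0 mem_seq1.
rewrite /search iteriS mem_filter; apply/andP; split.
  have := equitable_take k.+1 eq_p; rewrite /equitable size_takel //.
  by apply: equitable_on_sub => // i; rewrite mem_filter => /andP[].
rewrite (take_nth 0 lt_k_p); apply: allpairs_f; first exact: IHk (ltnW lt_k_p).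
by rewrite mem_iota add0n (allP bnd_p) ?mem_nth.
Qed.

Definition onto m (p : seq nat) := all (mem p) (iota 0 m).

Definition colour_rows m p :=
  [seq [seq count_mem j (nbr_colours p (index i p)) | j <- iota 0 m] | i <- iota 0 m].

Lemma mx_of_colour_rows m p (i j : 'I_m) :
  mx_of_rows m (colour_rows m p) i j = count_mem (val j) (nbr_colours p (index (val i) p)).
Proof. by rewrite mxE !(nth_map 0) ?size_iota // !nth_iota. Qed.

End EquitableSequences.

Definition relabel_rows (sg : seq nat) (R : seq (seq nat)) :=
  [seq [seq nth 0 (nth [::] R i) j | j <- sg] | i <- sg].

Lemma relabel_mx_of_rows m (s : 'S_m) sg R :
  size sg = m -> (forall i, val (s i) = nth 0 sg i) ->
  relabel s (mx_of_rows m R) = mx_of_rows m (relabel_rows sg R).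
Proof.
move=> sz_sg s_sg; apply/matrixP => i j.
by rewrite !mxE !(nth_map 0) ?sz_sg // !s_sg.
Qed.

Lemma perm_of_seq m sg :
  perm_eq sg (iota 0 m) -> exists s : 'S_m, forall i, val (s i) = nth 0 sg i.
Proof.
move=> sg_iota; have sz_sg : size sg = m by rewrite (perm_size sg_iota) size_iota.
have lt_sg (i : 'I_m) : nth 0 sg i < m.
  have : nth 0 sg i \in sg by rewrite mem_nth ?sz_sg.
  by rewrite (perm_mem sg_iota) mem_iota.
have inj_sg : injective (fun i => Ordinal (lt_sg i)).
  move=> i1 i2 /(congr1 val) /= /eqP; rewrite nth_uniq ?sz_sg //.
    by move/eqP/val_inj.
  by rewrite (perm_uniq sg_iota) iota_uniq.
by exists (perm inj_sg) => i; rewrite permE.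
Qed.

Section PerfectColourings.

Variables (T : finType) (e : rel T) (vs : seq T) (nbrs : seq (seq nat)).
Hypotheses (vs_uniq : uniq vs) (mem_vs : forall x, x \in vs).
Hypothesis nbrsE :
  forall x, nth [::] nbrs (index x vs) = [seq index y vs | y <- vs & e x y].

Definition perfect_for m (c : T -> 'I_m) (A : 'M[nat]_m) :=
  forall v j, #|[set w | e v w & c w == j]| = A (c v) j.

Definition colour_adj_matrix m (A : 'M[nat]_m) :=
  exists c : T -> 'I_m, (forall i, exists v, c v = i) /\ perfect_for c A.

Definition colours m (c : T -> 'I_m) := [seq val (c x) | x <- vs].

Lemma index_vs_lt x : index x vs < size vs.
Proof. by rewrite index_mem. Qed.

Lemma index_vs_onto i : i < size vs -> exists x, index x vs = i.
Proof.
case Evs: vs => [|x0 s] //; rewrite -Evs => lt_i.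
by exists (nth x0 vs i); rewrite index_uniq.
Qed.

Lemma card_count_vs (A : {pred T}) : #|A| = count (mem A) vs.
Proof.
rewrite cardE -size_filter; apply/perm_size/uniq_perm.
- exact: enum_uniq.
- exact: filter_uniq.
by move=> x; rewrite mem_enum mem_filter mem_vs andbT.
Qed.

Lemma nth_colours m (c : T -> 'I_m) x : nth 0 (colours c) (index x vs) = val (c x).
Proof. by rewrite (nth_map x) ?index_vs_lt // nth_index. Qed.

Lemma card_nbrs_coloured m (c : T -> 'I_m) v j :
  #|[set w | e v w & c w == j]|
  = count_mem (val j) (nbr_colours nbrs (colours c) (index v vs)).
Proof.
rewrite /nbr_colours nbrsE -map_comp (eq_map (nth_colours c)).
rewrite count_map count_filter card_count_vs.
by apply: eq_count => w; rewrite !inE andbC.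
Qed.

Lemma nbhd_within_vs x : nbhd_within nbrs (size vs) (index x vs).
Proof.
rewrite /nbhd_within index_vs_lt nbrsE all_map.
by apply/allP => y _; apply: index_vs_lt.
Qed.

Lemma equitable_vsP m p : size p = size vs ->
  reflect (forall x y, nth 0 p (index x vs) = nth 0 p (index y vs) -> forall c, c < m ->
             count_mem c (nbr_colours nbrs p (index x vs))
             = count_mem c (nbr_colours nbrs p (index y vs)))
          (equitable nbrs m p).
Proof.
move=> sz_p; apply: (iffP (equitable_onP _ _ _ _ _)) => [eq_p x y | eq_p i j].
  by apply: eq_p; rewrite mem_settled sz_p nbhd_within_vs.
rewrite !mem_settled sz_p => /andP[/index_vs_onto[x <-] _] /andP[/index_vs_onto[y <-] _].
exact: eq_p.
Qed.

Lemma perfect_colours_equitable m (c : T -> 'I_m) A :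
  perfect_for c A -> equitable nbrs m (colours c).
Proof.
move=> perf_c; apply/equitable_vsP; first by rewrite size_map.
move=> x y; rewrite !nth_colours => /val_inj eq_cxy a lt_a.
by rewrite -[a]/(val (Ordinal lt_a)) -!card_nbrs_coloured !perf_c eq_cxy.
Qed.

Lemma perfect_colour_rows m (c : T -> 'I_m) A :
  (forall i, exists v, c v = i) -> perfect_for c A ->
  A = mx_of_rows m (colour_rows nbrs m (colours c)).
Proof.
move=> onto_c perf_c; apply/matrixP => i j; rewrite mx_of_colour_rows.
have [v <-] := onto_c i; have cv_in : val (c v) \in colours c by apply: map_f.
have [|w Ew] := @index_vs_onto (index (val (c v)) (colours c)).
  by rewrite -(size_map (fun x => val (c x))) index_mem.
have cwv : c w = c v by apply: val_inj; rewrite /= -nth_colours Ew nth_index.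
by rewrite -Ew -card_nbrs_coloured perf_c cwv.
Qed.

Lemma equitable_colour_adj_matrix m p :
  size p = size vs -> all (fun c => c < m) p -> onto m p -> equitable nbrs m p ->
  colour_adj_matrix (mx_of_rows m (colour_rows nbrs m p)).
Proof.
move=> sz_p bnd_p onto_p eq_p.
have lt_p x : nth 0 p (index x vs) < m.
  by apply: (allP bnd_p); rewrite mem_nth // sz_p index_vs_lt.
pose c x := Ordinal (lt_p x).
have colours_c : colours c = p.
  apply: (@eq_from_nth _ 0); first by rewrite size_map sz_p.
  by move=> i; rewrite size_map => /index_vs_onto[x <-]; apply: nth_colours.
have index_colour (i : 'I_m) : exists2 x, index x vs = index (val i) p & c x = i.
  have i_p : val i \in p by apply: (allP onto_p); rewrite mem_iota add0n ltn_ord.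
  have [|x Ex] := @index_vs_onto (index (val i) p); first by rewrite -sz_p index_mem.
  by exists x; last by apply: val_inj; rewrite /= Ex nth_index.
exists c; split=> [i | v j]; first by have [x _ <-] := index_colour i; exists x.
rewrite card_nbrs_coloured colours_c mx_of_colour_rows.
have [x Ex cx] := index_colour (c v); rewrite -Ex.
have same_colour : nth 0 p (index v vs) = nth 0 p (index x vs).
  by rewrite -[RHS]/(val (c x)) cx.
by rewrite (elimT (equitable_vsP m sz_p) eq_p v x same_colour _ (ltn_ord j)).
Qed.

Lemma colour_adj_matrix_relabel m (s : 'S_m) A :
  colour_adj_matrix (relabel s A) -> colour_adj_matrix A.
Proof.
case=> c [onto_c perf_c]; exists (fun x => s (c x)); split=> [i | v j].
  by have [v cv] := onto_c (s^-1 i)%g; exists v; rewrite cv permKV.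
have -> : [set w | e v w & s (c w) == j] = [set w | e v w & c w == (s^-1 j)%g].
  by apply/setP => w; rewrite !inE (canF_eq (permK s)).
by rewrite perf_c mxE permKV.
Qed.

Definition classified m (rows : seq (seq (seq nat))) :=
  let found := [seq colour_rows nbrs m p | p <- search nbrs m (size vs) & onto m p] in
  all (fun R => has (fun sg => relabel_rows sg R \in rows) (permutations (iota 0 m))) found
  && all (mem found) rows.

Theorem classified_colour_adj_matrix m rows : classified m rows ->
  forall A, colour_adj_matrix A <-> exists s : 'S_m, relabel s A \in map (mx_of_rows m) rows.
Proof.
case/andP => /allP found_rows /allP rows_found A; split.
  case=> c [onto_c perf_c]; set P := colours c.
  have onto_P : onto m P.
    apply/allP => i; rewrite mem_iota => /andP[_ lt_i].
    have [v cv] := onto_c (Ordinal lt_i); rewrite -[i]/(val (Ordinal lt_i)) -cv.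
    exact: map_f.
  have P_found : P \in search nbrs m (size vs).
    rewrite -(size_map (fun x => val (c x)) vs).
    apply: equitable_search (perfect_colours_equitable perf_c).
    by apply/allP => _ /mapP[x _ ->]; apply: ltn_ord.
  have /hasP[sg] : has (fun sg => relabel_rows sg (colour_rows nbrs m P) \in rows)
                      (permutations (iota 0 m)).
    by apply: found_rows; rewrite map_f // mem_filter onto_P.
  rewrite mem_permutations => sg_iota relabel_in; have [s s_sg] := perm_of_seq sg_iota.
  have sz_sg : size sg = m by rewrite (perm_size sg_iota) size_iota.
  exists s; rewrite (perfect_colour_rows onto_c perf_c).
  by rewrite (relabel_mx_of_rows _ sz_sg s_sg) map_f.
case=> s /mapP[R R_rows relabel_A]; apply: (colour_adj_matrix_relabel (s := s)).
have /mapP[p] := rows_found R R_rows; rewrite mem_filter => /andP[onto_p].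
case/search_equitable => sz_p bnd_p eq_p R_p; rewrite relabel_A R_p.
exact: equitable_colour_adj_matrix.
Qed.

End PerfectColourings.

Definition q4_of_nat n : Q4 := [ffun i : 'I_4 => odd (n %/ 2 ^ i)].

Definition bit_dist a b := count (fun k => odd (a %/ 2 ^ k) != odd (b %/ 2 ^ k)) (iota 0 4).

Lemma card_q4_diff a b : #|[set i | q4_of_nat a i != q4_of_nat b i]| = bit_dist a b.
Proof.
rewrite cardsE cardE /enum_mem size_filter -enumT /bit_dist -val_enum_ord count_map.
by apply: eq_count => i /=; congr (~~ (_ == _)); apply: ffunE.
Qed.

(* Listed by Hamming weight, so that neighbourhoods are coloured early and the search
   prunes. *)
Definition q4_codes := [:: 0; 1; 2; 4; 8; 3; 5; 6; 9; 10; 12; 7; 11; 13; 14; 15].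

Definition q4_vertices := map q4_of_nat q4_codes.

Definition q4_nbrs :=
  [seq [seq n <- iota 0 16 | bit_dist (nth 0 q4_codes i) (nth 0 q4_codes n) == 1]
  | i <- iota 0 16].

Lemma q4_vertices_uniq : uniq q4_vertices.
Proof.
rewrite map_inj_in_uniq // => a b a_code b_code eq_ab.
have dist0 : bit_dist a b = 0.
  by rewrite -card_q4_diff eq_ab; apply: eq_card0 => i; rewrite !inE eqxx.
have dist0_eq :
    all (fun a => all (fun b => (bit_dist a b == 0) ==> (a == b)) q4_codes) q4_codes.
  by [].
by move/allP/(_ a a_code)/allP/(_ b b_code): dist0_eq; rewrite dist0 => /eqP.
Qed.

Lemma mem_q4_vertices x : x \in q4_vertices.
Proof.
have /subset_cardP eq_vs : #|q4_vertices| = #|Q4|.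
  by rewrite (card_uniqP q4_vertices_uniq) card_ffun card_bool card_ord.
by rewrite (eq_vs (subset_predT _)).
Qed.

Lemma q4_nbrsE x :
  nth [::] q4_nbrs (index x q4_vertices)
  = [seq index y q4_vertices | y <- q4_vertices & q4adj x y].
Proof.
pose vertex n := q4_of_nat (nth 0 q4_codes n).
have vs_iota : q4_vertices = map vertex (iota 0 16).
  by rewrite /q4_vertices -{1}(mkseq_nth 0 q4_codes) /mkseq -map_comp.
have nth_vs n : n < 16 -> nth (q4_of_nat 0) q4_vertices n = vertex n.
  by move=> lt_n; rewrite /q4_vertices (nth_map 0).
have index_vertex n : n < 16 -> index (vertex n) q4_vertices = n.
  by move=> lt_n; rewrite -nth_vs // index_uniq // q4_vertices_uniq.
have [i lt_i ->] : exists2 i, i < 16 & x = vertex i.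
  have x_vs := mem_q4_vertices x; exists (index x q4_vertices); first by rewrite index_mem.
  by rewrite -nth_vs ?nth_index // index_mem.
rewrite index_vertex // /q4_nbrs (nth_map 0) ?size_iota // nth_iota // add0n.
rewrite [in filter _ q4_vertices]vs_iota filter_map -map_comp -[LHS]map_id.
rewrite (@eq_filter _ _ (preim vertex (q4adj (vertex i)))) => [|n]; last first.
  by rewrite /= /q4adj card_q4_diff.
apply/eq_in_map => n; rewrite mem_filter mem_iota => /andP[_ lt_n].
exact/esym/index_vertex.
Qed.

Definition rows2 :=
  [:: [:: [:: 0; 4]; [:: 4; 0]];
      [:: [:: 1; 3]; [:: 1; 3]];
      [:: [:: 1; 3]; [:: 3; 1]];
      [:: [:: 2; 2]; [:: 2; 2]];
      [:: [:: 3; 1]; [:: 1; 3]]].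

Definition rows3 :=
  [:: [:: [:: 0; 0; 4]; [:: 0; 0; 4]; [:: 1; 3; 0]];
      [:: [:: 0; 0; 4]; [:: 0; 0; 4]; [:: 2; 2; 0]];
      [:: [:: 0; 2; 2]; [:: 2; 0; 2]; [:: 1; 1; 2]];
      [:: [:: 1; 1; 2]; [:: 1; 1; 2]; [:: 1; 1; 2]];
      [:: [:: 2; 0; 2]; [:: 0; 2; 2]; [:: 1; 1; 2]]].

Lemma q4_classified2 : classified q4_vertices q4_nbrs 2 rows2.
Proof. by vm_compute. Qed.

Lemma q4_classified3 : classified q4_vertices q4_nbrs 3 rows3.
Proof. by vm_compute. Qed.

Lemma list2E : list2 = map (mx_of_rows 2) rows2. Proof. by []. Qed.

Lemma list3E : list3 = map (mx_of_rows 3) rows3. Proof. by []. Qed.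

Theorem theorem5p1 :
  (forall A : 'M[nat]_2,
     is_colour_adj_matrix A <-> exists s : 'S_2, relabel s A \in list2) /\
  (forall A : 'M[nat]_3,
     is_colour_adj_matrix A <-> exists s : 'S_3, relabel s A \in list3).
Proof.
have classify := classified_colour_adj_matrix q4_vertices_uniq mem_q4_vertices q4_nbrsE.
split=> A.
- by rewrite list2E; apply: classify q4_classified2 A.
- by rewrite list3E; apply: classify q4_classified3 A.
Qed.
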